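(* Let $(\vdash,\overline{\cdot},\widehat{\cdot})$ be a setting satisfying Pre-Relevance, let $\mathcal{S},\mathcal{S}'\subseteq\mathcal{L}$ with $\mathcal{S}\mid\mathcal{S}'$, let $\mathcal{E}$ be a complete extension of $\mathcal{AF}_{\vdash}(\mathcal{S}\cup\mathcal{S}')$, $\mathcal{E}_1=\mathcal{E}\cap\mathit{Arg}_{\vdash}(\mathcal{S})$ and $\mathcal{E}_2=\mathcal{E}\cap\mathit{Arg}_{\vdash}(\mathcal{S}')$. Then (1) $\mathcal{E}=\mathsf{Defended}(\mathcal{E}_1\cup\mathcal{E}_2,\mathcal{AF}_{\vdash}(\mathcal{S}\cup\mathcal{S}'))$, and (2) $\mathcal{E}_1$ is a complete extension of $\mathcal{AF}_{\vdash}(\mathcal{S})$.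
   Context: $\mathcal{L}$ is the set of formulas of a language built from propositional atoms; $\mathsf{Atoms}(\mathcal{S})$ is the set of atoms occurring in $\mathcal{S}$, and $\mathcal{S}_1\mid\mathcal{S}_2$ means $\mathsf{Atoms}(\mathcal{S}_1)\cap\mathsf{Atoms}(\mathcal{S}_2)=\emptyset$. A setting is $(\vdash,\overline{\cdot},\widehat{\cdot})$ with ${\vdash}\subseteq\wp_{\sf fin}(\mathcal{L})\times\mathcal{L}$ arbitrary, $\overline{\cdot}:\mathcal{L}\to\wp(\mathcal{L})$, $\widehat{\cdot}$ assigning to each nonempty finite set a finite set of formulas, with $\widehat{\emptyset}=\emptyset$. $\mathit{Arg}_{\vdash}(\mathcal{S})=\{(\Gamma,\gamma):\Gamma\subseteq\mathcal{S}\text{ finite},\Gamma\vdash\gamma\}$; $\mathcal{AF}_{\vdash}(\mathcal{S})$ is the attack graph on it where $(\Gamma,\gamma)$ attacks $(\Gamma',\gamma')$ iff $\gamma\in\overline{\phi}$ for some $\phi\in\widehat{\Gamma'}$. $\mathcal{A}$ defends $a$ iff every attacker of $a$ in the framework is attacked by a member of $\mathcal{A}$; $\mathsf{Defended}(\mathcal{A},\mathcal{AF}_{\vdash}(\mathcal{S}))$ is the set of arguments of $\mathit{Arg}_{\vdash}(\mathcal{S})$ defended by $\mathcal{A}$. Complete = conflict-free, defends all its members, and contains every argument it defends. Pre-Relevance of the setting: (a) for all $\mathcal{S}_1,\mathcal{S}_2,\phi$ with $\mathcal{S}_1\cup\{\phi\}\mid\mathcal{S}_2$, $\mathcal{S}_1\cup\mathcal{S}_2\vdash\phi$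 implies $\mathcal{S}_1'\vdash\phi$ for some $\mathcal{S}_1'\subseteq\mathcal{S}_1$; (b) primeness: for all sets of atoms $\mathcal{A}_1\mid\mathcal{A}_2$, all finite $\mathcal{S}_1,\mathcal{T}_1,\mathcal{S}_2,\mathcal{T}_2$ with $\mathsf{Atoms}(\mathcal{S}_i),\mathsf{Atoms}(\mathcal{T}_i)\subseteq\mathcal{A}_i$, and all $\phi,\psi$ with $\psi\in\overline{\phi}$, $\phi\in\widehat{\mathcal{T}_1\cup\mathcal{T}_2}$: if $\mathcal{S}_1\cup\mathcal{S}_2\vdash\psi$ then there are $i\in\{1,2\}$, $\mathcal{S}_i'\subseteq\mathcal{S}_i$, $\phi_i\in\widehat{\mathcal{T}_i}$, $\psi_i\in\overline{\phi_i}$ with $\mathcal{S}_i'\vdash\psi_i$; (c) $\widehat{\Delta}\subseteq\widehat{\Delta\cup\Delta'}$ for all finite $\Delta,\Delta'$. *)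

From mathcomp Require Import all_boot.
From mathcomp Require Import finmap.
Set Implicit Arguments. Unset Strict Implicit. Unset Printing Implicit Defensive.
Local Open Scope fset_scope.

(* A language: formulas of type [Form] (a choiceType, so that finite sets
   {fset Form} exist), atoms of type [Atom], and [occ φ p] meaning that the
   atom p occurs in φ.  Sets of formulas S ⊆ L are predicates Form -> Prop. *)

Definition AtomsS (Form Atom : Type) (occ : Form -> Atom -> Prop)
  (S : Form -> Prop) (p : Atom) : Prop := exists2 f, S f & occ f p.

Definition atom_disj (Form Atom : Type) (occ : Form -> Atom -> Prop)
  (S1 S2 : Form -> Prop) : Prop :=
  forall p, AtomsS occ S1 p -> AtomsS occ S2 p -> False.

Definition fsetS (Form : choiceType) (X : {fset Form}) : Form -> Prop :=
  fun f => f \in X.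

Record setting (Form : choiceType) := Setting {
  der : {fset Form} -> Form -> Prop;
  bar : Form -> Form -> Prop;                 (* bar φ ψ : ψ ∈ overline φ *)
  hat : {fset Form} -> {fset Form};
  hat0 : hat fset0 = fset0
}.

Section Args.
Variables (Form : choiceType) (st : setting Form).

Definition argument := ({fset Form} * Form)%type.

Definition Arg (S : Form -> Prop) (a : argument) : Prop :=
  (forall f, f \in a.1 -> S f) /\ der st a.1 a.2.

Definition attacks (a b : argument) : Prop :=
  exists2 phi, phi \in hat st b.1 & bar st phi a.2.

Definition defends (S : Form -> Prop) (A : argument -> Prop) (a : argument) : Prop :=
  forall b, Arg S b -> attacks b a -> exists2 c, A c & attacks c b.

Definition Defended (S : Form -> Prop) (A : argument -> Prop) (a : argument) : Prop :=
  Arg S a /\ defends S A a.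

Definition conflict_free (A : argument -> Prop) : Prop :=
  forall a b, A a -> A b -> ~ attacks a b.

Definition complete (S : Form -> Prop) (E : argument -> Prop) : Prop :=
  [/\ (forall a, E a -> Arg S a),
      conflict_free E,
      (forall a, E a -> defends S E a) &
      (forall a, Arg S a -> defends S E a -> E a)].
End Args.

Definition pre_relevance (Form : choiceType) (Atom : Type)
  (occ : Form -> Atom -> Prop) (st : setting Form) : Prop :=
  [/\
   (forall (S1 S2 : {fset Form}) (phi : Form),
      atom_disj occ (fsetS (phi |` S1)) (fsetS S2) ->
      der st (S1 `|` S2) phi ->
      exists2 S1' : {fset Form}, S1' `<=` S1 & der st S1' phi),
   (forall (A1 A2 : Atom -> Prop) (S1 T1 S2 T2 : {fset Form}) (phi psi : Form),
      (forall p, A1 p -> A2 p -> False) ->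
      (forall p, AtomsS occ (fsetS S1) p -> A1 p) ->
      (forall p, AtomsS occ (fsetS T1) p -> A1 p) ->
      (forall p, AtomsS occ (fsetS S2) p -> A2 p) ->
      (forall p, AtomsS occ (fsetS T2) p -> A2 p) ->
      bar st phi psi -> phi \in hat st (T1 `|` T2) ->
      der st (S1 `|` S2) psi ->
      (exists2 S1' : {fset Form}, S1' `<=` S1 &
         exists2 phi1, phi1 \in hat st T1 &
         exists2 psi1, bar st phi1 psi1 & der st S1' psi1) \/
      (exists2 S2' : {fset Form}, S2' `<=` S2 &
         exists2 phi2, phi2 \in hat st T2 &
         exists2 psi2, bar st phi2 psi2 & der st S2' psi2)) &
   (forall D D' : {fset Form}, hat st D `<=` hat st (D `|` D'))].

From mathcomp Require Import all_boot.
From mathcomp Require Import finmap.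
From mathcomp Require Import boolp.
Set Implicit Arguments. Unset Strict Implicit. Unset Printing Implicit Defensive.
Local Open Scope fset_scope.

(* Primeness, applied to the partitions of the premises by membership in [S],
   shows that when an argument over [S ∪ S'] attacks another, already a
   sub-argument with all premises in [S] or all in [S'] attacks it.  As hat is
   monotone, a sub-argument is attacked by no more than the argument itself, so
   sub-arguments of members of a complete extension [E] stay in [E]; hence
   [E1 ∪ E2] defends everything [E] defends.  When the target lies over [S], its
   premises outside [S] form the empty set, whose hat is empty, so the
   sub-argument lies over [S]: this transfers defence between AF(S ∪ S') and
   AF(S). *)

Section Restriction.
Variable Form : choiceType.

Definition restr (P : Form -> Prop) (X : {fset Form}) : {fset Form} :=
  [fset x in X | `[< P x >]].

Lemma restr_sub P X : restr P X `<=` X.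
Proof. by apply/fsubsetP => x; rewrite !inE => /andP []. Qed.

Lemma in_restr P X x : x \in restr P X -> x \in X /\ P x.
Proof. by rewrite !inE => /andP [-> /asboolP]. Qed.

Lemma restrUC P X : X = restr P X `|` restr (fun x => ~ P x) X.
Proof.
apply/fsetP => x; rewrite in_fsetU !inE.
by case: (x \in X); case: asboolP => [Px|nPx]; case: asboolP.
Qed.

Lemma restrC_eq0 P X : (forall x, x \in X -> P x) ->
  restr (fun x => ~ P x) X = fset0.
Proof.
move=> XP; apply/fsetP => x; rewrite inE.
by apply/negbTE/negP => /in_restr [/XP].
Qed.

Lemma AtomsS_restr (Atom : Type) (occ : Form -> Atom -> Prop) P Q X p :
  (forall x, x \in X -> P x -> Q x) ->
  AtomsS occ (fsetS (restr P X)) p -> AtomsS occ Q p.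
Proof. by move=> PQ [x /in_restr [Xx Px] occ_xp]; exists x => //; apply: PQ. Qed.

End Restriction.

Lemma Arg_weaken (Form : choiceType) (st : setting Form) (P Q : Form -> Prop) a :
  (forall f, P f -> Q f) -> Arg st P a -> Arg st Q a.
Proof. by move=> PQ [a_P der_a]; split=> // f /a_P /PQ. Qed.

Section HatMonotone.
Variables (Form : choiceType) (st : setting Form).
Hypothesis hat_subU : forall D D' : {fset Form}, hat st D `<=` hat st (D `|` D').

Lemma hatS X Y : X `<=` Y -> hat st X `<=` hat st Y.
Proof. by move=> XY; have := hat_subU X Y; rewrite (fsetUidPr _ _ XY). Qed.

Lemma attacksS (c b b' : argument Form) :
  b.1 `<=` b'.1 -> attacks st c b -> attacks st c b'.
Proof. by move=> bb' [phi hat_phi bar_phi]; exists phi => //; apply: (fsubsetP (hatS bb')). Qed.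

Lemma complete_subargument Su E (c c' : argument Form) :
  complete st Su E -> E c -> c'.1 `<=` c.1 -> der st c'.1 c'.2 -> E c'.
Proof.
move=> [E_Arg _ E_def E_max] Ec c'c der_c'.
have [c_Su _] := E_Arg c Ec.
apply: E_max; first by split=> // f /(fsubsetP c'c) /c_Su.
by move=> b Arg_b /(attacksS c'c); apply: E_def.
Qed.

End HatMonotone.

Section SplitAttack.
Variables (Form : choiceType) (Atom : Type) (occ : Form -> Atom -> Prop).
Variables (st : setting Form) (S S' : Form -> Prop).
Hypothesis HP : pre_relevance occ st.
Hypothesis disjSS' : atom_disj occ S S'.

Let SU f := S f \/ S' f.

(* The second part is cut out by [~ S] rather than by [S']: a formula without
   atoms may lie in both [S] and [S'], and only [~ S] leaves nothing for a
   target over [S]. *)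
Lemma attack_split (c b : argument Form) :
  Arg st SU c -> (forall f, f \in b.1 -> SU f) -> attacks st c b ->
  (exists2 c', c'.1 `<=` c.1 /\ Arg st S c' & attacks st c' (restr S b.1, b.2)) \/
  (exists2 c', c'.1 `<=` c.1 /\ Arg st S' c'
             & attacks st c' (restr (fun x => ~ S x) b.1, b.2)).
Proof.
case: c b => G g [T t] [/= G_SU der_g] /= T_SU [phi hat_phi bar_phi].
have [_ prime _] := HP.
have toS X p : AtomsS occ (fsetS (restr S X)) p -> AtomsS occ S p.
  exact: AtomsS_restr.
have toS' X : (forall f, f \in X -> SU f) -> forall p,
    AtomsS occ (fsetS (restr (fun x => ~ S x) X)) p -> AtomsS occ S' p.
  by move=> X_SU p; apply: AtomsS_restr => x /X_SU [].
rewrite /= (restrUC S T) in hat_phi; rewrite /= (restrUC S G) in der_g.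
have [[G1 G1G [phi1 hat1 [psi1 bar1 der1]]]|[G2 G2G [phi2 hat2 [psi2 bar2 der2]]]] :=
  prime _ _ _ _ _ _ _ _ disjSS' (toS G) (toS T) (toS' G G_SU) (toS' T T_SU)
    bar_phi hat_phi der_g.
- left; exists (G1, psi1); last by exists phi1.
  split; first exact: fsubset_trans G1G (restr_sub _ _).
  by split=> // f /(fsubsetP G1G) /in_restr [].
- right; exists (G2, psi2); last by exists phi2.
  split; first exact: fsubset_trans G2G (restr_sub _ _).
  split=> // f /(fsubsetP G2G) /in_restr [/G_SU [] //].
Qed.

Lemma attack_split_l (c b : argument Form) :
  Arg st SU c -> (forall f, f \in b.1 -> S f) -> attacks st c b ->
  exists2 c', c'.1 `<=` c.1 /\ Arg st S c' & attacks st c' b.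
Proof.
have [_ _ hat_subU] := HP.
move=> Arg_c b_S att_cb.
have b_SU f : f \in b.1 -> SU f by move/b_S; left.
have [[c' c'c att]|[c' _ [phi]]] := attack_split Arg_c b_SU att_cb.
- by exists c' => //; apply: (attacksS hat_subU _ att); apply: restr_sub.
- by rewrite /= restrC_eq0 // hat0 in_fset0.
Qed.

Variable E : argument Form -> Prop.
Hypothesis E_compl : complete st SU E.

Let E1 a := E a /\ Arg st S a.
Let E2 a := E a /\ Arg st S' a.

Lemma complete_attack_split (c b : argument Form) :
  Arg st SU b -> E c -> attacks st c b -> exists2 c', E1 c' \/ E2 c' & attacks st c' b.
Proof.
have [_ _ hat_subU] := HP.
have [E_Arg _ _ _] := E_compl.
move=> [b_SU _] Ec att_cb.
have E_sub (c' : argument Form) : c'.1 `<=` c.1 -> der st c'.1 c'.2 -> E c'.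
  exact: (complete_subargument hat_subU E_compl Ec).
have [[c' [c'c [c'_S der_c']] att]|[c' [c'c [c'_S' der_c']] att]] :=
  attack_split (E_Arg c Ec) b_SU att_cb; exists c'.
- by left; split; [apply: E_sub|].
- apply: (attacksS hat_subU _ att); exact: restr_sub.
- by right; split; [apply: E_sub|].
- apply: (attacksS hat_subU _ att); exact: restr_sub.
Qed.

Lemma complete_attack_split_l (c b : argument Form) :
  Arg st S b -> E c -> attacks st c b -> exists2 c', E1 c' & attacks st c' b.
Proof.
have [_ _ hat_subU] := HP.
move=> [b_S _] Ec att_cb.
have [E_Arg _ _ _] := E_compl.
have [c' [c'c Arg_c'] att] := attack_split_l (E_Arg c Ec) b_S att_cb.
exists c' => //; split=> //.
exact: (complete_subargument hat_subU E_compl Ec c'c Arg_c'.2).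
Qed.

End SplitAttack.

Theorem lemma5 (Form : choiceType) (Atom : Type) (occ : Form -> Atom -> Prop)
  (st : setting Form) (S S' : Form -> Prop) (E : argument Form -> Prop) :
  pre_relevance occ st ->
  atom_disj occ S S' ->
  complete st (fun f => S f \/ S' f) E ->
  let E1 := fun a => E a /\ Arg st S a in
  let E2 := fun a => E a /\ Arg st S' a in
  (forall a, E a <-> Defended st (fun f => S f \/ S' f) (fun b => E1 b \/ E2 b) a)
  /\ complete st S E1.
Proof.
move=> HP disjSS' E_compl E1 E2.
have [_ _ hat_subU] := HP.
have [E_Arg E_cf E_def E_max] := E_compl.
have S_SU f : S f -> S f \/ S' f by left.
split=> [a|].
  split=> [Ea|[Arg_a def_a]].
    split=> [|b Arg_b /(E_def a Ea b Arg_b) [c Ec att_cb]]; first exact: E_Arg.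
    exact: (complete_attack_split HP disjSS' E_compl Arg_b Ec att_cb).
  by apply: E_max => // b Arg_b /(def_a b Arg_b) [c [[Ec _]|[Ec _]] att]; exists c.
split=> [a [] //|a b [Ea _] [Eb _]|a [Ea _] b Arg_b att_ba|a Arg_a def_a].
- exact: E_cf.
- have [c Ec att_cb] := E_def a Ea b (Arg_weaken S_SU Arg_b) att_ba.
  exact: (complete_attack_split_l HP disjSS' E_compl Arg_b Ec att_cb).
- split=> //; apply: E_max; first exact: Arg_weaken S_SU Arg_a.
  move=> b Arg_b att_ba.
  have [b' [b'b Arg_b'] att_b'a] := attack_split_l HP disjSS' Arg_b Arg_a.1 att_ba.
  have [c [Ec _] att_cb'] := def_a b' Arg_b' att_b'a.
  by exists c => //; apply: (attacksS hat_subU b'b att_cb').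
Qed.
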